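(* Let $\mathcal{H}$ be a right quaternionic Hilbert space and $x_1,\dots,x_n,y_1,\dots,y_n\in\mathcal{H}$ unit vectors. Let $g(z)=\sum_{i=0}^\infty a_iz^{2i}$ be analytic in the open complex unit disk with $a_i\in\mathbb{R}$ and $\sum_{i=0}^\infty|a_i|=1$. Then there exist unit vectors $u_1,\dots,u_n,v_1,\dots,v_n$ in a right quaternionic Hilbert space $\mathcal{H}'$ such that $\langle x_i,y_j\rangle\,g(|\langle x_i,y_j\rangle|)=\langle u_i,v_j\rangle$ for all $i,j=1,\dots,n$.
   Context: A right quaternionic Hilbert space is a right $\mathbb{H}$-vector space with inner product satisfying $\langle y,x\rangle=\overline{\langle x,y\rangle}$, $\langle xa+yb,z\rangle=\bar a\langle x,z\rangle+\bar b\langle y,z\rangle$, $\langle z,xa+yb\rangle=\langle z,x\rangle a+\langle z,y\rangle b$, $\langle x,x\rangle>0$ for $x\ne0$. *)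

From Stdlib Require Import Reals Lra.
From Coquelicot Require Import Coquelicot.
Open Scope R_scope.

Record quat := Quat { q0 : R; q1 : R; q2 : R; q3 : R }.

Definition qreal (r : R) : quat := Quat r 0 0 0.
Definition qzero : quat := qreal 0.
Definition qone : quat := qreal 1.
Definition qadd (p q : quat) : quat :=
  Quat (q0 p + q0 q) (q1 p + q1 q) (q2 p + q2 q) (q3 p + q3 q).
(* Hamilton product: (a0 + a1 i + a2 j + a3 k)(b0 + b1 i + b2 j + b3 k) *)
Definition qmul (p q : quat) : quat :=
  Quat (q0 p * q0 q - q1 p * q1 q - q2 p * q2 q - q3 p * q3 q)
       (q0 p * q1 q + q1 p * q0 q + q2 p * q3 q - q3 p * q2 q)
       (q0 p * q2 q - q1 p * q3 q + q2 p * q0 q + q3 p * q1 q)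
       (q0 p * q3 q + q1 p * q2 q - q2 p * q1 q + q3 p * q0 q).
Definition qconj (p : quat) : quat := Quat (q0 p) (- q1 p) (- q2 p) (- q3 p).
Definition qabs (p : quat) : R :=
  sqrt (q0 p ^ 2 + q1 p ^ 2 + q2 p ^ 2 + q3 p ^ 2).

(* A right H-vector space with an H-valued inner product satisfying the
   axioms of the paper, complete for the induced norm. Scalar action is on
   the right: [scale x a] is "x a". *)
Record RQHilbert := {
  carrier :> Type;
  vzero : carrier;
  vadd : carrier -> carrier -> carrier;
  vopp : carrier -> carrier;
  scale : carrier -> quat -> carrier;
  ip : carrier -> carrier -> quat;
  vaddA : forall x y z, vadd x (vadd y z) = vadd (vadd x y) z;
  vaddC : forall x y, vadd x y = vadd y x;
  vadd0 : forall x, vadd x vzero = x;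
  vaddN : forall x, vadd x (vopp x) = vzero;
  scale1 : forall x, scale x qone = x;
  scaleA : forall x a b, scale x (qmul a b) = scale (scale x a) b;
  scaleDv : forall x y a, scale (vadd x y) a = vadd (scale x a) (scale y a);
  scaleDs : forall x a b, scale x (qadd a b) = vadd (scale x a) (scale x b);
  ip_sym : forall x y, ip y x = qconj (ip x y);
  ip_linl : forall x y z a b,
      ip (vadd (scale x a) (scale y b)) z
      = qadd (qmul (qconj a) (ip x z)) (qmul (qconj b) (ip y z));
  ip_linr : forall x y z a b,
      ip z (vadd (scale x a) (scale y b))
      = qadd (qmul (ip z x) a) (qmul (ip z y) b);
  ip_pos : forall x, x <> vzero -> exists r, 0 < r /\ ip x x = qreal r;
  complete : forall u : nat -> carrier,
      (forall eps, 0 < eps -> exists N, forall m n, (N <= m)%nat -> (N <= n)%nat ->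
          sqrt (q0 (ip (vadd (u m) (vopp (u n))) (vadd (u m) (vopp (u n))))) < eps) ->
      exists l, forall eps, 0 < eps -> exists N, forall n, (N <= n)%nat ->
          sqrt (q0 (ip (vadd (u n) (vopp l)) (vadd (u n) (vopp l)))) < eps
}.

Definition vnorm (H : RQHilbert) (x : H) : R := sqrt (q0 (ip H x x)).
Definition unit_vec (H : RQHilbert) (x : H) : Prop := vnorm H x = 1.

Definition gfun (a : nat -> R) (t : R) : R := Series (fun i => a i * t ^ (2 * i)).

From Stdlib Require Import Reals Lra Lia Classical.
From Coquelicot Require Import Coquelicot.
Open Scope R_scope.

(* Put w = (x_1, ..., x_n, y_1, ..., y_n). The matrix P = (|<w_c, w_d>|^2) is
   positive semidefinite: it is a compression of the entrywise square of the
   real Gram matrix of the vectors w_c e, e in {1, i, j, k} (Schur product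
   theorem). Hence so is Z = sum_k |a_k| D_k P^(k) D_k, where P^(k) is the
   entrywise power and D_k = diag(1, ..., 1, sgn a_k, ..., sgn a_k); Z has unit
   diagonal and mixed block g(|<x_i, y_j>|). Factoring Z = L L^T, the vectors
   u_i = x_i ⊗ L_i and v_j = y_j ⊗ L_(n+j) of H ⊗ R^(2n) = H^(2n) work,
   because <x ⊗ c, y ⊗ d> = <x, y> (c . d). *)

Fixpoint fsum (n : nat) (f : nat -> R) : R :=
  match n with O => 0 | S n' => fsum n' f + f n' end.

Lemma fsum_ext n f g : (forall i, (i < n)%nat -> f i = g i) -> fsum n f = fsum n g.
Proof.
  induction n; simpl; intros E; [reflexivity|].
  rewrite IHn by (intros; apply E; lia). rewrite E by lia. reflexivity.
Qed.

Lemma fsum_zero n f : (forall i, (i < n)%nat -> f i = 0) -> fsum n f = 0.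
Proof.
  induction n; simpl; intros Hf; [reflexivity|].
  rewrite IHn by (intros; apply Hf; lia). rewrite Hf by lia. ring.
Qed.

Lemma fsum_plus n f g : fsum n (fun i => f i + g i) = fsum n f + fsum n g.
Proof. induction n; simpl; [|rewrite IHn]; ring. Qed.

Lemma fsum_scal n c f : fsum n (fun i => c * f i) = c * fsum n f.
Proof. induction n; simpl; [|rewrite IHn]; ring. Qed.

Lemma fsum_succ_l n f : fsum (S n) f = f O + fsum n (fun i => f (S i)).
Proof. induction n; simpl in *; [|rewrite IHn]; ring. Qed.

Lemma fsum_add n m f : fsum (n + m) f = fsum n f + fsum m (fun i => f (n + i)%nat).
Proof.
  induction m; simpl; [rewrite Nat.add_0_r; ring|].
  rewrite Nat.add_succ_r; simpl; rewrite IHm; ring.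
Qed.

Lemma fsum_swap n m f :
  fsum n (fun i => fsum m (fun j => f i j)) = fsum m (fun j => fsum n (fun i => f i j)).
Proof.
  induction n; simpl; [now rewrite fsum_zero|].
  now rewrite IHn, <- fsum_plus.
Qed.

Lemma fsum_nonneg n f : (forall i, (i < n)%nat -> 0 <= f i) -> 0 <= fsum n f.
Proof.
  induction n; simpl; intros Hf; [lra|].
  assert (0 <= f n) by (apply Hf; lia).
  assert (0 <= fsum n f) by (apply IHn; intros; apply Hf; lia).
  lra.
Qed.

Definition delta (c i : nat) : R := if Nat.eqb i c then 1 else 0.

Lemma fsum_delta n c f : (c < n)%nat -> fsum n (fun i => delta c i * f i) = f c.
Proof.
  induction n; intros Hc; [lia|]. simpl. unfold delta at 2.
  destruct (Nat.eqb_spec n c) as [<-|Hne].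
  - rewrite fsum_zero; [ring|].
    intros i Hi. unfold delta. destruct (Nat.eqb_spec i n); [lia|ring].
  - rewrite IHn by lia. ring.
Qed.

Lemma fsum_blocks k N f :
  fsum (N * k) f = fsum N (fun a => fsum k (fun r => f (a * k + r)%nat)).
Proof.
  induction N; [reflexivity|].
  replace (S N * k)%nat with (N * k + k)%nat by lia.
  now rewrite fsum_add, IHN.
Qed.

Definition quad_form n (Z : nat -> nat -> R) (x : nat -> R) : R :=
  fsum n (fun a => fsum n (fun b => x a * x b * Z a b)).

Definition psd n (Z : nat -> nat -> R) : Prop :=
  (forall a b, Z a b = Z b a) /\ forall x, 0 <= quad_form n Z x.

Lemma quad_form_succ n Z x : (forall a b, Z a b = Z b a) ->
  quad_form (S n) Z x =
    x O * x O * Z O O + 2 * x O * fsum n (fun b => x (S b) * Z O (S b))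
    + quad_form n (fun a b => Z (S a) (S b)) (fun a => x (S a)).
Proof.
  intros Hs. unfold quad_form. rewrite !fsum_succ_l.
  rewrite (fsum_ext n (fun i => fsum (S n) _)
     (fun i => x O * (x (S i) * Z O (S i))
               + fsum n (fun b => x (S i) * x (S b) * Z (S i) (S b)))).
  2:{ intros i _. rewrite fsum_succ_l, (Hs (S i)). ring. }
  rewrite fsum_plus, fsum_scal.
  rewrite (fsum_ext n (fun b => x O * x (S b) * Z O (S b))
                      (fun b => x O * (x (S b) * Z O (S b)))) by (intros; ring).
  rewrite fsum_scal. ring.
Qed.

Lemma quad_form_pair n Z p r a b : (a < n)%nat -> (b < n)%nat ->
  quad_form n Z (fun i => p * delta a i + r * delta b i)
  = p * p * Z a a + p * r * (Z a b + Z b a) + r * r * Z b b.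
Proof.
  intros Ha Hb. unfold quad_form.
  set (x := fun i => p * delta a i + r * delta b i).
  set (y := fun i => p * Z i a + r * Z i b).
  rewrite (fsum_ext n _ (fun i => p * (delta a i * y i) + r * (delta b i * y i))).
  - rewrite fsum_plus, !fsum_scal, !fsum_delta by assumption. unfold y. ring.
  - intros i _.
    rewrite (fsum_ext n _ (fun j => (x i * p) * (delta a j * Z i j)
                                  + (x i * r) * (delta b j * Z i j))) by (intros; unfold x; ring).
    rewrite fsum_plus, !fsum_scal, !fsum_delta by assumption. unfold x, y. ring.
Qed.

Lemma quad_form_rank1_sub n Z c d x :
  quad_form n (fun a b => Z a b - c a * c b / d) x
  = quad_form n Z x - (fsum n (fun a => x a * c a)) ^ 2 / d.
Proof.
  unfold quad_form.
  rewrite (fsum_ext n _ (fun a => fsum n (fun b => x a * x b * Z a b)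
                              + (- (x a * c a / d)) * fsum n (fun b => x b * c b))).
  2:{ intros. rewrite <- fsum_scal, <- fsum_plus. apply fsum_ext; intros. unfold Rdiv; ring. }
  rewrite fsum_plus.
  rewrite (fsum_ext n (fun a => _ * fsum n (fun b => x b * c b))
             (fun a => (- fsum n (fun b => x b * c b) / d) * (x a * c a))) by (intros; unfold Rdiv; ring).
  rewrite fsum_scal. unfold Rdiv. ring.
Qed.

Lemma quad_form_ext n Z Z' x : (forall a b, (a < n)%nat -> (b < n)%nat -> Z a b = Z' a b) ->
  quad_form n Z x = quad_form n Z' x.
Proof.
  intros E. unfold quad_form. apply fsum_ext. intros a Ha. apply fsum_ext. intros b Hb.
  now rewrite E.
Qed.

Lemma quad_form_scal n c Z x : quad_form n (fun a b => c * Z a b) x = c * quad_form n Z x.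
Proof.
  unfold quad_form. rewrite <- fsum_scal. apply fsum_ext. intros.
  rewrite <- fsum_scal. apply fsum_ext. intros. ring.
Qed.

Lemma quad_form_blocks k N Z x : (0 < k)%nat ->
  quad_form (N * k) Z (fun a => x (a / k)%nat)
  = quad_form N (fun a b => fsum k (fun r => fsum k (fun s => Z (a * k + r)%nat (b * k + s)%nat))) x.
Proof.
  intros Hk.
  assert (Hdiv : forall a r, (r < k)%nat -> ((a * k + r) / k = a)%nat).
  { intros a r Hr. rewrite Nat.div_add_l, Nat.div_small; lia. }
  unfold quad_form. rewrite fsum_blocks. apply fsum_ext. intros a _.
  rewrite (fsum_ext k _ (fun r => fsum N (fun b => fsum k (fun s =>
             x a * x b * Z (a * k + r)%nat (b * k + s)%nat)))).
  - rewrite fsum_swap. apply fsum_ext. intros b _.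
    rewrite <- fsum_scal. apply fsum_ext. intros r _.
    rewrite <- fsum_scal. apply fsum_ext. intros; ring.
  - intros r Hr. rewrite fsum_blocks. apply fsum_ext. intros b _. apply fsum_ext. intros s Hs.
    now rewrite !Hdiv.
Qed.

Section PsdEntries.
Variables (n : nat) (Z : nat -> nat -> R).
Hypothesis HZ : psd n Z.

Lemma psd_pair_nonneg p r a b : (a < n)%nat -> (b < n)%nat ->
  0 <= p * p * Z a a + 2 * p * r * Z a b + r * r * Z b b.
Proof.
  intros Ha Hb. destruct HZ as [Hs Hq].
  specialize (Hq (fun i => p * delta a i + r * delta b i)).
  rewrite quad_form_pair, (Hs b a) in Hq by assumption. lra.
Qed.

Lemma psd_diag_nonneg a : (a < n)%nat -> 0 <= Z a a.
Proof. intros Ha. pose proof (psd_pair_nonneg 1 0 a a Ha Ha). lra. Qed.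

Lemma psd_offdiag_le a b : (a < n)%nat -> (b < n)%nat -> 2 * Z a b <= Z a a + Z b b.
Proof. intros Ha Hb. pose proof (psd_pair_nonneg 1 (-1) a b Ha Hb). lra. Qed.

Lemma psd_diag0_row0 a b : (a < n)%nat -> (b < n)%nat -> Z a a = 0 -> Z a b = 0.
Proof.
  intros Ha Hb Z0. destruct (Req_dec (Z a b) 0) as [|Hne]; [assumption|exfalso].
  (* the quadratic [2 p Z a b + Z b b] in [p] would be unbounded below *)
  pose proof (psd_pair_nonneg (- (Z b b + 1) / (2 * Z a b)) 1 a b Ha Hb) as Hp.
  assert (E : 2 * (- (Z b b + 1) / (2 * Z a b)) * 1 * Z a b = - (Z b b + 1)) by (field; assumption).
  rewrite Z0 in Hp. lra.
Qed.

End PsdEntries.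

Lemma psd_schur_complement n Z : psd (S n) Z ->
  psd n (fun a b => Z (S a) (S b) - Z O (S a) * Z O (S b) / Z O O).
Proof.
  intros [Hs Hq]. split.
  { intros a b. rewrite (Hs (S a) (S b)). unfold Rdiv. ring. }
  intros x. rewrite quad_form_rank1_sub.
  set (s := fsum n (fun a => x a * Z O (S a))).
  set (t := - s / Z O O).
  specialize (Hq (fun a => match a with O => t | S a' => x a' end)).
  rewrite quad_form_succ in Hq by assumption. fold s in Hq.
  (* [t] minimises the quadratic in the first coordinate; when [Z O O = 0]
     both sides vanish since [/ 0 = 0] *)
  assert (Ht : t * t * Z O O + 2 * t * s = - (s ^ 2 / Z O O)).
  { unfold t. destruct (Req_dec (Z O O) 0) as [E|E].
    - rewrite E. unfold Rdiv. rewrite Rinv_0. ring.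
    - field. assumption. }
  change (fun a => x a) with x in Hq. lra.
Qed.

Lemma psd_factor n Z : psd n Z -> exists L : nat -> nat -> R,
  forall a b, (a < n)%nat -> (b < n)%nat -> Z a b = fsum n (fun l => L a l * L b l).
Proof.
  revert Z. induction n as [|n IHn]; intros Z HZ.
  { exists (fun _ _ => 0). intros; lia. }
  destruct (IHn _ (psd_schur_complement n Z HZ)) as [L' HL'].
  set (r := sqrt (Z O O)).
  assert (Hr : r * r = Z O O) by (apply sqrt_sqrt, (psd_diag_nonneg _ _ HZ); lia).
  assert (Hrow : forall b, (b < n)%nat -> Z O (S b) = r * (Z O (S b) / r)).
  { intros b Hb. destruct (Req_dec r 0) as [E|E]; [|field; assumption].
    rewrite (psd_diag0_row0 _ _ HZ) by (lia || nra). unfold Rdiv. ring. }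
  assert (Hcol : forall a b, Z O (S a) / r * (Z O (S b) / r) = Z O (S a) * Z O (S b) / Z O O).
  { intros. rewrite <- Hr. unfold Rdiv. rewrite Rinv_mult. ring. }
  exists (fun a l => match a, l with
                     | O, O => r | O, S _ => 0
                     | S a', O => Z O (S a') / r | S a', S l' => L' a' l' end).
  destruct HZ as [Hs _].
  intros [|a] [|b] Ha Hb; rewrite fsum_succ_l.
  - rewrite fsum_zero by (intros; ring). lra.
  - rewrite fsum_zero, Rplus_0_r by (intros; ring). apply Hrow; lia.
  - rewrite fsum_zero, Rplus_0_r, Rmult_comm, Hs by (intros; ring). apply Hrow; lia.
  - rewrite <- HL', Hcol by lia. ring.
Qed.

Lemma psd_mul n Z1 Z2 : psd n Z1 -> psd n Z2 -> psd n (fun a b => Z1 a b * Z2 a b).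
Proof.
  intros H1 [Hs2 Hq2]. destruct (psd_factor n Z1 H1) as [L HL]. destruct H1 as [Hs1 _].
  split; [intros a b; now rewrite Hs1, Hs2|]. intros x.
  (* Z1 = L L^T splits the form into a sum of forms of Z2 *)
  assert (E : quad_form n (fun a b => Z1 a b * Z2 a b) x
              = fsum n (fun l => quad_form n Z2 (fun a => x a * L a l))).
  { unfold quad_form. symmetry.
    rewrite fsum_swap. apply fsum_ext. intros a Ha.
    rewrite fsum_swap. apply fsum_ext. intros b Hb.
    rewrite HL by assumption.
    transitivity (x a * x b * Z2 a b * fsum n (fun l => L a l * L b l)); [|ring].
    rewrite <- fsum_scal. apply fsum_ext. intros; ring. }
  rewrite E. apply fsum_nonneg. intros. apply Hq2.
Qed.

Lemma psd_ones n : psd n (fun _ _ => 1).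
Proof.
  split; [reflexivity|]. intros x. unfold quad_form.
  rewrite (fsum_ext n _ (fun a => fsum n x * x a)).
  - rewrite fsum_scal. nra.
  - intros. rewrite Rmult_comm, <- fsum_scal. apply fsum_ext. intros; ring.
Qed.

Lemma psd_pow n Z k : psd n Z -> psd n (fun a b => Z a b ^ k).
Proof. intros HZ. induction k; [apply psd_ones | apply (psd_mul n Z _ HZ IHk)]. Qed.

Lemma psd_diag_congr n Z d : psd n Z -> psd n (fun a b => d a * d b * Z a b).
Proof.
  intros [Hs Hq]. split; [intros; rewrite Hs; ring|]. intros x.
  specialize (Hq (fun a => x a * d a)). unfold quad_form in *.
  erewrite fsum_ext; [apply Hq|]. intros. apply fsum_ext. intros. ring.
Qed.

Lemma psd_scal n Z c : 0 <= c -> psd n Z -> psd n (fun a b => c * Z a b).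
Proof.
  intros Hc [Hs Hq]. split; [intros; rewrite Hs; ring|]. intros x.
  rewrite quad_form_scal. specialize (Hq x). nra.
Qed.

Lemma is_series_zero : is_series (fun _ : nat => 0) 0.
Proof.
  apply (filterlim_ext (fun _ => zero)); [|apply filterlim_const].
  intros k. symmetry. exact (sum_n_m_const_zero 0 k).
Qed.

Lemma is_series_fsum N (f : nat -> nat -> R) s :
  (forall a, (a < N)%nat -> is_series (f a) (s a)) ->
  is_series (fun k => fsum N (fun a => f a k)) (fsum N s).
Proof.
  induction N; intros Hf; simpl; [apply is_series_zero|].
  apply (is_series_plus (fun k => fsum N (fun a => f a k)) (f N));
    [apply IHN; intros|]; apply Hf; lia.
Qed.

Lemma Series_nonneg f : ex_series f -> (forall k, 0 <= f k) -> 0 <= Series f.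
Proof.
  intros Hf Hpos. rewrite <- (Rmult_0_l (Series f)), <- Series_scal_l.
  apply Series_le; [intros k; specialize (Hpos k); lra | exact Hf].
Qed.

Lemma psd_Series n (F : nat -> nat -> nat -> R) :
  (forall k, psd n (F k)) ->
  (forall a b, (a < n)%nat -> (b < n)%nat -> ex_series (fun k => F k a b)) ->
  psd n (fun a b => Series (fun k => F k a b)).
Proof.
  intros HF Hex. split; [intros; apply Series_ext; intros k; apply (HF k)|]. intros x.
  assert (Hq : is_series (fun k => quad_form n (F k) x)
                 (quad_form n (fun a b => Series (fun k => F k a b)) x)).
  { apply is_series_fsum. intros a Ha. apply is_series_fsum. intros b Hb.
    apply (is_series_scal_l (x a * x b) (fun k => F k a b)), Series_correct, Hex; assumption. }
  rewrite <- (is_series_unique _ _ Hq).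
  apply Series_nonneg; [eexists; exact Hq | intros; apply HF].
Qed.

Ltac qring :=
  repeat match goal with |- context [ip ?H ?x ?y] => generalize (ip H x y) end;
  intros;
  repeat match goal with q : quat |- _ => destruct q end;
  unfold qzero, qone, qmul, qadd, qconj, qreal; simpl; f_equal; ring.

Definition qnorm2 (q : quat) : R := q0 q ^ 2 + q1 q ^ 2 + q2 q ^ 2 + q3 q ^ 2.

Lemma qnorm2_nonneg q : 0 <= qnorm2 q.
Proof. unfold qnorm2. nra. Qed.

Lemma qabs_pow2 q : qabs q ^ 2 = qnorm2 q.
Proof. apply pow2_sqrt, qnorm2_nonneg. Qed.

Section HilbertBasics.
Variable H : RQHilbert.
Implicit Types x y z : H.

Lemma scale_qzero x : scale H x qzero = vzero H.
Proof.
  set (s := scale H x qzero).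
  assert (E : vadd H s s = s) by (unfold s; rewrite <- scaleDs; f_equal; qring).
  rewrite <- (vaddN H s). rewrite <- E at 2. now rewrite <- vaddA, vaddN, vadd0.
Qed.

Lemma ip_scalel x z a : ip H (scale H x a) z = qmul (qconj a) (ip H x z).
Proof.
  pose proof (ip_linl H x x z a qzero) as E.
  rewrite scale_qzero, vadd0 in E. rewrite E. qring.
Qed.

Lemma ip_scaler x z a : ip H z (scale H x a) = qmul (ip H z x) a.
Proof.
  pose proof (ip_linr H x x z a qzero) as E.
  rewrite scale_qzero, vadd0 in E. rewrite E. qring.
Qed.

Lemma ip_addl x y z : ip H (vadd H x y) z = qadd (ip H x z) (ip H y z).
Proof.
  pose proof (ip_linl H x y z qone qone) as E.
  rewrite !scale1 in E. rewrite E. qring.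
Qed.

Lemma ip_addr x y z : ip H z (vadd H x y) = qadd (ip H z x) (ip H z y).
Proof.
  pose proof (ip_linr H x y z qone qone) as E.
  rewrite !scale1 in E. rewrite E. qring.
Qed.

Lemma ip_0l z : ip H (vzero H) z = qzero.
Proof. rewrite <- (scale_qzero z), ip_scalel. qring. Qed.

Lemma ip_0r z : ip H z (vzero H) = qzero.
Proof. rewrite ip_sym, ip_0l. qring. Qed.

Lemma ip_self x : exists r, 0 <= r /\ ip H x x = qreal r.
Proof.
  destruct (classic (x = vzero H)) as [->|Hx].
  - exists 0. split; [lra|]. apply ip_0l.
  - destruct (ip_pos H x Hx) as [r [Hr E]]. exists r. split; [lra|assumption].
Qed.

Lemma ip_self_re_nonneg x : 0 <= q0 (ip H x x).
Proof. destruct (ip_self x) as [r [Hr ->]]. exact Hr. Qed.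

Lemma ip_self_eq0 x : ip H x x = qzero -> x = vzero H.
Proof.
  intros E. apply NNPP. intros Hx.
  destruct (ip_pos H x Hx) as [r [Hr E']]. rewrite E in E'. injection E'. lra.
Qed.

Lemma unit_vecP x : unit_vec H x <-> ip H x x = qone.
Proof.
  unfold unit_vec, vnorm. destruct (ip_self x) as [r [Hr ->]]. simpl. split.
  - intros E. rewrite <- (sqrt_sqrt r Hr), E. unfold qone. f_equal. ring.
  - intros E. injection E as ->. apply sqrt_1.
Qed.

Fixpoint vcomb (v : nat -> H) (c : nat -> R) (N : nat) : H :=
  match N with
  | O => vzero H
  | S N => vadd H (vcomb v c N) (scale H (v N) (qreal (c N)))
  end.

Lemma re_ip_vcomb_l v c N z :
  q0 (ip H (vcomb v c N) z) = fsum N (fun a => c a * q0 (ip H (v a) z)).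
Proof.
  induction N; simpl; [now rewrite ip_0l|].
  rewrite ip_addl, ip_scalel. simpl. rewrite IHN.
  destruct (ip H (v N) z). simpl. ring.
Qed.

Lemma re_ip_vcomb_r v c N z :
  q0 (ip H z (vcomb v c N)) = fsum N (fun a => c a * q0 (ip H z (v a))).
Proof.
  induction N; simpl; [now rewrite ip_0r|].
  rewrite ip_addr, ip_scaler. simpl. rewrite IHN.
  destruct (ip H z (v N)). simpl. ring.
Qed.

Lemma psd_re_gram v N : psd N (fun a b => q0 (ip H (v a) (v b))).
Proof.
  split; [intros; rewrite (ip_sym H (v a)); now destruct (ip H (v a) (v b))|].
  intros c. unfold quad_form.
  rewrite (fsum_ext N _ (fun a => c a * q0 (ip H (v a) (vcomb v c N)))).
  - rewrite <- re_ip_vcomb_l. apply ip_self_re_nonneg.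
  - intros. rewrite re_ip_vcomb_r, <- fsum_scal. apply fsum_ext. intros; ring.
Qed.

Definition qbasis (r : nat) : quat :=
  match r with
  | O => qone | 1 => Quat 0 1 0 0 | 2 => Quat 0 0 1 0 | _ => Quat 0 0 0 1
  end%nat.

Lemma qnorm2_by_basis q :
  fsum 4 (fun r => fsum 4 (fun s =>
    q0 (qmul (qconj (qbasis r)) (qmul q (qbasis s))) ^ 2)) = 4 * qnorm2 q.
Proof. destruct q. unfold qnorm2, qone, qreal. simpl. ring. Qed.

Lemma psd_qnorm2_gram (w : nat -> H) N : psd N (fun a b => qnorm2 (ip H (w a) (w b))).
Proof.
  set (v := fun c => scale H (w (c / 4)%nat) (qbasis (c mod 4))).
  set (K := fun c d => q0 (ip H (v c) (v d))).
  assert (HK : psd (N * 4) (fun c d => K c d * K c d)) by (apply psd_mul; apply psd_re_gram).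
  split.
  { intros a b. rewrite (ip_sym H (w a)). destruct (ip H (w b) (w a)). unfold qnorm2. simpl. ring. }
  intros x. destruct HK as [_ HK]. specialize (HK (fun c => x (c / 4)%nat)).
  rewrite quad_form_blocks in HK by lia.
  assert (Hentry : forall a b r s, (r < 4)%nat -> (s < 4)%nat ->
     K (a * 4 + r)%nat (b * 4 + s)%nat
     = q0 (qmul (qconj (qbasis r)) (qmul (ip H (w a) (w b)) (qbasis s)))).
  { intros a b r s Hr Hs. unfold K, v.
    rewrite !Nat.div_add_l, !Nat.div_small, !Nat.add_0_r by lia.
    rewrite !(Nat.add_comm (_ * 4)), !Nat.Div0.mod_add, !Nat.mod_small by lia.
    now rewrite ip_scalel, ip_scaler. }
  rewrite (quad_form_ext N _ (fun a b => 4 * qnorm2 (ip H (w a) (w b)))), quad_form_scal in HK.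
  - lra.
  - intros a b _ _. rewrite <- qnorm2_by_basis.
    apply fsum_ext. intros r Hr. apply fsum_ext. intros s Hs.
    rewrite Hentry by assumption. ring.
Qed.

End HilbertBasics.

Definition zero_space : RQHilbert.
Proof.
  refine {| carrier := unit; vzero := tt; vadd := fun _ _ => tt; vopp := fun _ => tt;
            scale := fun _ _ => tt; ip := fun _ _ => qzero |};
    try (intros; repeat match goal with u : unit |- _ => destruct u end;
         solve [reflexivity | qring]).
  - intros [] Hx. now elim Hx.
  - intros u _. exists tt. intros eps Heps. exists O. intros. simpl. now rewrite sqrt_0.
Defined.

Lemma sqrt_add_le a b : 0 <= a -> 0 <= b -> sqrt (a + b) <= sqrt a + sqrt b.
Proof.
  intros Ha Hb. pose proof (sqrt_pos a). pose proof (sqrt_pos b).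
  rewrite <- (sqrt_square (sqrt a + sqrt b)) by lra.
  apply sqrt_le_1_alt. pose proof (sqrt_sqrt a Ha). pose proof (sqrt_sqrt b Hb). nra.
Qed.

Definition direct_sum (H1 H2 : RQHilbert) : RQHilbert.
Proof.
  refine {| carrier := (carrier H1 * carrier H2)%type; vzero := (vzero H1, vzero H2);
    vadd := fun p q => (vadd H1 (fst p) (fst q), vadd H2 (snd p) (snd q));
    vopp := fun p => (vopp H1 (fst p), vopp H2 (snd p));
    scale := fun p a => (scale H1 (fst p) a, scale H2 (snd p) a);
    ip := fun p q => qadd (ip H1 (fst p) (fst q)) (ip H2 (snd p) (snd q)) |}.
  - intros [] [] []; simpl; f_equal; apply vaddA.
  - intros [] []; simpl; f_equal; apply vaddC.
  - intros []; simpl; f_equal; apply vadd0.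
  - intros []; simpl; f_equal; apply vaddN.
  - intros []; simpl; f_equal; apply scale1.
  - intros [] a b; simpl; f_equal; apply scaleA.
  - intros [] [] a; simpl; f_equal; apply scaleDv.
  - intros [] a b; simpl; f_equal; apply scaleDs.
  - intros [x1 x2] [y1 y2]; simpl. rewrite (ip_sym H1 x1), (ip_sym H2 x2). qring.
  - intros [x1 x2] [y1 y2] [z1 z2] a b; simpl. rewrite (ip_linl H1), (ip_linl H2). qring.
  - intros [x1 x2] [y1 y2] [z1 z2] a b; simpl. rewrite (ip_linr H1), (ip_linr H2). qring.
  - intros [x1 x2] Hx; simpl.
    destruct (ip_self H1 x1) as [r1 [Hr1 E1]], (ip_self H2 x2) as [r2 [Hr2 E2]].
    rewrite E1, E2. exists (r1 + r2). split; [|qring].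
    destruct (Req_dec r1 0) as [->|]; [|lra]. destruct (Req_dec r2 0) as [->|]; [|lra].
    exfalso. apply Hx. f_equal; apply ip_self_eq0; assumption.
  - intros u Hu. cbn -[sqrt] in Hu |- *.
    assert (Hd1 : forall p q : H1, 0 <= q0 (ip H1 (vadd H1 p (vopp H1 q)) (vadd H1 p (vopp H1 q))))
      by (intros; apply ip_self_re_nonneg).
    assert (Hd2 : forall p q : H2, 0 <= q0 (ip H2 (vadd H2 p (vopp H2 q)) (vadd H2 p (vopp H2 q))))
      by (intros; apply ip_self_re_nonneg).
    destruct (complete H1 (fun k => fst (u k))) as [l1 Hl1].
    { intros eps Heps. destruct (Hu eps Heps) as [N HN]. exists N. intros m k Hm Hk.
      eapply Rle_lt_trans; [|exact (HN m k Hm Hk)].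
      apply sqrt_le_1_alt. specialize (Hd2 (snd (u m)) (snd (u k))). lra. }
    destruct (complete H2 (fun k => snd (u k))) as [l2 Hl2].
    { intros eps Heps. destruct (Hu eps Heps) as [N HN]. exists N. intros m k Hm Hk.
      eapply Rle_lt_trans; [|exact (HN m k Hm Hk)].
      apply sqrt_le_1_alt. specialize (Hd1 (fst (u m)) (fst (u k))). lra. }
    exists (l1, l2). intros eps Heps.
    destruct (Hl1 (eps / 2)) as [N1 HN1]; [lra|]. destruct (Hl2 (eps / 2)) as [N2 HN2]; [lra|].
    exists (Nat.max N1 N2). intros k Hk.
    specialize (HN1 k ltac:(lia)). specialize (HN2 k ltac:(lia)).
    eapply Rle_lt_trans; [apply sqrt_add_le; [apply Hd1 | apply Hd2]|]. simpl. lra.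
Defined.

Fixpoint direct_power (H : RQHilbert) (N : nat) : RQHilbert :=
  match N with O => zero_space | S N => direct_sum H (direct_power H N) end.

(* [tensor H N x c] is x ⊗ c in H ⊗ R^N, realised as (x c_0, ..., x c_(N-1)) in H^N *)
Fixpoint tensor (H : RQHilbert) (N : nat) (x : H) (c : nat -> R) : direct_power H N :=
  match N return direct_power H N with
  | O => tt
  | S N => (scale H x (qreal (c O)), tensor H N x (fun l => c (S l)))
  end.

Lemma ip_tensor H N x y c d :
  ip (direct_power H N) (tensor H N x c) (tensor H N y d)
  = qmul (ip H x y) (qreal (fsum N (fun l => c l * d l))).
Proof.
  revert c d. induction N as [|N IHN]; intros c d; [simpl; qring|].
  rewrite fsum_succ_l. simpl. rewrite IHN, ip_scalel, ip_scaler. qring.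
Qed.

Lemma unit_vec_tensor H N x c : unit_vec H x -> fsum N (fun l => c l * c l) = 1 ->
  unit_vec (direct_power H N) (tensor H N x c).
Proof.
  rewrite !unit_vecP, ip_tensor. intros -> ->. qring.
Qed.

Lemma Rabs_sign_le1 r : Rabs (sign r) <= 1.
Proof. unfold sign, Rabs. destruct total_order_T as [[]|]; destruct Rcase_abs; lra. Qed.

Lemma Rabs_mul_sign r : Rabs r * sign r = r.
Proof. unfold sign, Rabs. destruct total_order_T as [[]|]; destruct Rcase_abs; lra. Qed.

Lemma Rabs_mul_sign_sqr r : Rabs r * (sign r * sign r) = Rabs r.
Proof. unfold sign, Rabs. destruct total_order_T as [[]|]; destruct Rcase_abs; lra. Qed.

Section Kernel.
Variables (N m : nat) (P : nat -> nat -> R) (a : nat -> R).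
Hypothesis HP : psd N P.
Hypothesis HPdiag : forall c, (c < N)%nat -> P c c = 1.
Hypothesis HPpos : forall c d, (c < N)%nat -> (d < N)%nat -> 0 <= P c d.
Hypothesis Ha : is_series (fun k => Rabs (a k)) 1.

(* The indices below [m] index the x's, the others the y's: the y-side is
   multiplied by the sign of a_k, so that the mixed block carries a_k itself. *)
Definition kernel_sign k c : R := if Nat.ltb c m then 1 else sign (a k).

Definition kernel_term k c d : R :=
  Rabs (a k) * (kernel_sign k c * kernel_sign k d * P c d ^ k).

Definition kernel c d : R := Series (fun k => kernel_term k c d).

Lemma kernel_term_bound k c d : (c < N)%nat -> (d < N)%nat ->
  Rabs (kernel_term k c d) <= Rabs (a k).
Proof.
  intros Hc Hd.
  assert (Hs : forall e, Rabs (kernel_sign k e) <= 1).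
  { intros e. unfold kernel_sign. destruct (Nat.ltb e m);
      [rewrite Rabs_R1; lra | apply Rabs_sign_le1]. }
  assert (HPk : Rabs (P c d ^ k) <= 1).
  { assert (P c d <= 1).
    { pose proof (psd_offdiag_le N P HP c d Hc Hd). rewrite !HPdiag in * by assumption. lra. }
    rewrite Rabs_pos_eq by (apply pow_le, HPpos; assumption).
    rewrite <- (pow1 k). apply pow_incr. split; [apply HPpos|]; assumption. }
  unfold kernel_term. rewrite !Rabs_mult, Rabs_Rabsolu.
  pose proof (Rabs_pos (a k)). pose proof (Rabs_pos (P c d ^ k)).
  pose proof (Rabs_pos (kernel_sign k c)). pose proof (Rabs_pos (kernel_sign k d)).
  pose proof (Hs c). pose proof (Hs d).
  assert (Rabs (kernel_sign k c) * Rabs (kernel_sign k d) <= 1) by nra.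
  assert (Rabs (kernel_sign k c) * Rabs (kernel_sign k d) * Rabs (P c d ^ k) <= 1) by nra.
  rewrite <- (Rmult_1_r (Rabs (a k))) at 2. apply Rmult_le_compat_l; assumption.
Qed.

Lemma kernel_psd : psd N kernel.
Proof.
  apply psd_Series.
  - intros k. apply psd_scal; [apply Rabs_pos|]. apply psd_diag_congr, psd_pow, HP.
  - intros c d Hc Hd. apply (@ex_series_le R_AbsRing R_CompleteNormedModule _ (fun k => Rabs (a k))).
    + intros k. apply kernel_term_bound; assumption.
    + exists 1. exact Ha.
Qed.

Lemma kernel_diag c : (c < N)%nat -> kernel c c = 1.
Proof.
  intros Hc.
  assert (E : forall k, Rabs (a k) = kernel_term k c c).
  { intros k. unfold kernel_term, kernel_sign. rewrite HPdiag, pow1 by assumption.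
    destruct (Nat.ltb c m); [ring|]. rewrite Rmult_1_r, Rabs_mul_sign_sqr. reflexivity. }
  apply is_series_unique, (is_series_ext _ _ _ E), Ha.
Qed.

Lemma kernel_cross c d : (c < m)%nat -> (m <= d)%nat ->
  kernel c d = Series (fun k => a k * P c d ^ k).
Proof.
  intros Hc Hd. apply Series_ext. intros k. unfold kernel_term, kernel_sign.
  destruct (Nat.ltb_spec c m), (Nat.ltb_spec d m); try lia.
  rewrite <- (Rabs_mul_sign (a k)) at 3. ring.
Qed.

End Kernel.

Theorem mainTheorem16 (H : RQHilbert) (n : nat) (x y : nat -> carrier H)
  (hx : forall i, (i < n)%nat -> unit_vec H (x i))
  (hy : forall j, (j < n)%nat -> unit_vec H (y j))
  (a : nat -> R)
  (ha_sum : is_series (fun i => Rabs (a i)) 1) :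
  exists (H' : RQHilbert) (u v : nat -> carrier H'),
    (forall i, (i < n)%nat -> unit_vec H' (u i)) /\
    (forall j, (j < n)%nat -> unit_vec H' (v j)) /\
    (forall i j, (i < n)%nat -> (j < n)%nat ->
       qmul (ip H (x i) (y j)) (qreal (gfun a (qabs (ip H (x i) (y j)))))
       = ip H' (u i) (v j)).
Proof.
  set (w := fun c => if Nat.ltb c n then x c else y (c - n)%nat).
  set (P := fun c d => qnorm2 (ip H (w c) (w d))).
  assert (HPdiag : forall c, (c < n + n)%nat -> P c c = 1).
  { intros c Hc. unfold P. replace (ip H (w c) (w c)) with qone; [unfold qnorm2; simpl; ring|].
    symmetry. apply unit_vecP. unfold w. destruct (Nat.ltb_spec c n); [apply hx | apply hy]; lia. }
  destruct (psd_factor (n + n) (kernel n P a)) as [L HL].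
  { apply kernel_psd; [apply psd_qnorm2_gram | exact HPdiag | intros; apply qnorm2_nonneg | exact ha_sum]. }
  exists (direct_power H (n + n)), (fun i => tensor H (n + n) (x i) (L i)),
    (fun j => tensor H (n + n) (y j) (L (n + j)%nat)).
  split; [|split].
  - intros i Hi. apply unit_vec_tensor; [apply hx; assumption|].
    rewrite <- HL, (kernel_diag (n + n) n P a HPdiag ha_sum) by lia. reflexivity.
  - intros j Hj. apply unit_vec_tensor; [apply hy; assumption|].
    rewrite <- HL, (kernel_diag (n + n) n P a HPdiag ha_sum) by lia. reflexivity.
  - intros i j Hi Hj. rewrite ip_tensor, <- HL, kernel_cross by lia.
    unfold gfun. do 2 f_equal. apply Series_ext. intros k.
    unfold P, w. destruct (Nat.ltb_spec i n), (Nat.ltb_spec (n + j) n); try lia.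
    now rewrite Nat.add_comm, Nat.add_sub, pow_mult, qabs_pow2.
Qed.
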